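(* Let $n\ge1$, $R>0$, $\gamma\in(0,1)$, $\beta=\frac{2}{2-\gamma}$, and let $U\in C^2((R,\infty))$, positive on $(R,\infty)$, with $U,U'$ extending continuously to $r=R$, solve $$U''+\Big(\frac{n-1}{r}+\frac r2\Big)U'-\frac\beta2U=\gamma U^{\gamma-1}\ \text{ in }(R,\infty),\qquad U(R)=U'(R)=0.$$ Then $U>0$ and $U'>0$ in $(R,\infty)$, $(U^{1/\beta})'(R)=\frac{\sqrt2}{\beta}$ (as a right derivative, i.e. $\lim_{r\downarrow R}U^{1/\beta}(r)/(r-R)=\sqrt2/\beta$), and $\lim_{r\to\infty}U(r)/r^\beta=c$ for some $c>0$. *)

From Stdlib Require Import Reals.
From Coquelicot Require Import Coquelicot.
Open Scope R_scope.

Definition beta_of (g : R) : R := 2 / (2 - g).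

From Stdlib Require Import Reals Lra Psatz Classical.
From Coquelicot Require Import Coquelicot.
Open Scope R_scope.

(* Near [Rad] the equation forces [U'' >= g/2], so [U'] becomes positive at once, and it can
   never return to 0 since at a zero of [U'] we have [U'' = beta U/2 + g U^(g-1) > 0].
   The energy [U'^2/2 - U^g] vanishes at [Rad] and its derivative
   [U' (beta U/2 - drift n r U')] is [O(U + U')] times [U'], so [U'^2 = 2 U^g (1 + o(1))]:
   the slope of [U^(1/beta)] tends to [sqrt 2 / beta], hence so does [U^(1/beta) / (r - Rad)].
   At infinity, [W = r U' - beta U] satisfies
   [(W e^(r^2/4))' = e^(r^2/4) (g r U^(g-1) - (n + beta - 2) U')], which bounds [W] above by a
   constant [B] and below by [-C U / r^2].  Then [(U + B/beta) r^-beta] decreases while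
   [U r^-beta e^(-C/(2 r^2))] increases, so [U / r^beta] converges to a positive limit. *)

Lemma continuity_pt_is_derive (f : R -> R) x l : is_derive f x l -> continuity_pt f x.
Proof.
  intros Hf. apply continuity_pt_filterlim, (ex_derive_continuous f x). now exists l.
Qed.

Lemma is_derive_scal_id (k x : R) : is_derive (fun y => k * y) x k.
Proof. auto_derive; [easy|ring]. Qed.

Lemma derive_nonneg_le (f df : R -> R) a b : a <= b ->
  (forall x, a <= x <= b -> is_derive f x (df x)) ->
  (forall x, a <= x <= b -> 0 <= df x) -> f a <= f b.
Proof.
  intros Hab Hd Hp.
  destruct (MVT_gen f a b df) as [c [Hc E]];
    rewrite ?Rmin_left, ?Rmax_right in * by lra.
  - intros x Hx. apply Hd; lra.
  - intros x Hx. apply (continuity_pt_is_derive _ _ (df x)), Hd; lra.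
  - assert (0 <= df c) by (apply Hp; lra). nra.
Qed.

Lemma Rabs_diff_le_of_derive (f g df dg : R -> R) a b : a <= b ->
  (forall x, a <= x <= b -> is_derive f x (df x)) ->
  (forall x, a <= x <= b -> is_derive g x (dg x)) ->
  (forall x, a <= x <= b -> Rabs (df x) <= dg x) ->
  Rabs (f b - f a) <= g b - g a.
Proof.
  intros Hab Hf Hg Hfg.
  assert (Hminus : g a - f a <= g b - f b).
  { apply (derive_nonneg_le (fun x => g x - f x) (fun x => dg x - df x) a b Hab).
    - intros x Hx. exact (is_derive_minus g f x _ _ (Hg x Hx) (Hf x Hx)).
    - intros x Hx. pose proof (Rle_abs (df x)). pose proof (Hfg x Hx). lra. }
  assert (Hplus : g a + f a <= g b + f b).
  { apply (derive_nonneg_le (fun x => g x + f x) (fun x => dg x + df x) a b Hab).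
    - intros x Hx. exact (is_derive_plus g f x _ _ (Hg x Hx) (Hf x Hx)).
    - intros x Hx. pose proof (Rle_abs (- df x)) as Hopp. rewrite Rabs_Ropp in Hopp.
      pose proof (Hfg x Hx). lra. }
  apply Rabs_le. lra.
Qed.

(* Otherwise the minimum of [f] on [[a, t]] is [<= L] and lies in [(a, t]], where [f' > 0]
   makes [f] smaller just to its left. *)
Lemma derive_pos_barrier (f df : R -> R) a t L : a <= t ->
  (forall x, a <= x <= t -> is_derive f x (df x)) ->
  (forall x, a <= x <= t -> f x <= L -> 0 < df x) -> L < f a -> L < f t.
Proof.
  intros Hat Hd Hp HL.
  destruct (Rlt_or_le L (f t)) as [H|H]; [exact H|exfalso].
  destruct (continuity_ab_min f a t Hat) as [m [Hmin Hm]].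
  { intros x Hx. apply (continuity_pt_is_derive _ _ (df x)), Hd; lra. }
  assert (Hfm : f m <= L) by (specialize (Hmin t ltac:(lra)); lra).
  assert (Ham : a < m) by (destruct (Req_dec a m); [subst; lra|lra]).
  assert (Hdm : 0 < df m) by (apply Hp; lra).
  destruct (proj1 (is_derive_Reals f m (df m)) (Hd m Hm) (df m) Hdm) as [[del Hdel] Hslope].
  set (h := - Rmin (del / 2) (m - a)).
  assert (Hh : - Rmin (del / 2) (m - a) < 0) by (apply Ropp_lt_gt_0_contravar, Rmin_pos; lra).
  pose proof (Rmin_l (del / 2) (m - a)). pose proof (Rmin_r (del / 2) (m - a)).
  specialize (Hslope h ltac:(unfold h; lra) ltac:(rewrite Rabs_left; simpl; unfold h; lra)).
  specialize (Hmin (m + h) ltac:(unfold h; lra)).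
  apply Rabs_def2 in Hslope.
  assert (Hq : 0 < (f (m + h) - f m) / h) by lra.
  assert (f (m + h) - f m < 0); [|lra].
  replace (f (m + h) - f m) with ((f (m + h) - f m) / h * h) by (field; unfold h; lra).
  apply Rmult_pos_neg; [lra|unfold h; lra].
Qed.

Lemma at_right_lt a b : a < b -> at_right a (fun s => a < s < b).
Proof.
  intros Hab. exists (mkposreal (b - a) ltac:(lra)). intros y Hy Hay.
  change (Rabs (y - a) < b - a) in Hy. apply Rabs_def2 in Hy. lra.
Qed.

Lemma filterlim_at_right_Rabs (f : R -> R) a l :
  filterlim f (at_right a) (locally l) <->
  forall eps, 0 < eps -> exists d, 0 < d /\ forall y, a < y < a + d -> Rabs (f y - l) < eps.
Proof.
  split.
  - intros H eps Heps.
    destruct (proj1 (filterlim_locally f l) H (mkposreal eps Heps)) as [d Hd].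
    exists d. split; [apply cond_pos|]. intros y Hy. apply (Hd y); [|lra].
    change (Rabs (y - a) < d). rewrite Rabs_right; lra.
  - intros H. apply filterlim_locally. intros eps.
    destruct (H eps (cond_pos eps)) as [d [Hd Hy]].
    exists (mkposreal d Hd). intros y By Hay. apply Hy.
    change (Rabs (y - a) < d) in By. apply Rabs_def2 in By. lra.
Qed.

(* Without it, [filterlim_le] spends a long time searching for this instance. *)
#[local] Instance at_right_proper' a : ProperFilter' (at_right a) :=
  Proper_StrongProper _ (at_right_proper_filter a).

Lemma lim_right_le (h : R -> R) a b l M : a < b ->
  filterlim h (at_right a) (locally l) -> (forall s, a < s < b -> h s <= M) -> l <= M.
Proof.
  intros Hab Hh HM.
  apply (filterlim_le (F := at_right a) h (fun _ => M) l M); [|exact Hh|apply filterlim_const].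
  exact (filter_imp _ _ HM (at_right_lt a b Hab)).
Qed.

Lemma lim_right_ge (h : R -> R) a b l M : a < b ->
  filterlim h (at_right a) (locally l) -> (forall s, a < s < b -> M <= h s) -> M <= l.
Proof.
  intros Hab Hh HM.
  apply (filterlim_le (F := at_right a) (fun _ => M) h M l); [|apply filterlim_const|exact Hh].
  exact (filter_imp _ _ HM (at_right_lt a b Hab)).
Qed.

Lemma filterlim_Rplus {T} {F : (T -> Prop) -> Prop} {FF : Filter F} (f g : T -> R) a b :
  filterlim f F (locally a) -> filterlim g F (locally b) ->
  filterlim (fun x => f x + g x) F (locally (a + b)).
Proof.
  intros Hf Hg. eapply filterlim_comp_2; [exact Hf|exact Hg|].
  exact (filterlim_Rbar_plus a b (a + b) eq_refl).
Qed.

Lemma filterlim_Rmult {T} {F : (T -> Prop) -> Prop} {FF : Filter F} (f g : T -> R) a b :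
  filterlim f F (locally a) -> filterlim g F (locally b) ->
  filterlim (fun x => f x * g x) F (locally (a * b)).
Proof.
  intros Hf Hg. eapply filterlim_comp_2; [exact Hf|exact Hg|].
  exact (filterlim_Rbar_mult a b (a * b) eq_refl).
Qed.

Lemma filterlim_Rpower_0 {T} {F : (T -> Prop) -> Prop} {FF : Filter F} (f : T -> R) p :
  0 < p -> F (fun x => 0 < f x) -> filterlim f F (locally 0) ->
  filterlim (fun x => Rpower (f x) p) F (locally 0).
Proof.
  intros Hp Hpos Hf. apply filterlim_locally. intros eps.
  assert (He : 0 < Rpower eps (/ p)) by apply exp_pos.
  apply (filter_imp (fun x => 0 < f x /\ ball 0 (mkposreal _ He) (f x))).
  - intros x [Hx Hb]. change (Rabs (f x - 0) < Rpower eps (/ p)) in Hb.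
    change (Rabs (Rpower (f x) p - 0) < eps).
    assert (Hfx : 0 < Rpower (f x) p) by apply exp_pos.
    rewrite Rminus_0_r, Rabs_right in Hb by lra.
    rewrite Rminus_0_r, Rabs_right by lra.
    rewrite <- (Rpower_1 eps) by apply cond_pos.
    replace 1 with (/ p * p) by (field; lra).
    rewrite <- Rpower_mult. apply Rlt_Rpower_l; lra.
  - apply filter_and; [exact Hpos|]. exact (proj1 (filterlim_locally f 0) Hf _).
Qed.

Lemma lim_right_div_of_derive (f df : R -> R) a L :
  (forall x, a < x -> is_derive f x (df x)) ->
  filterlim f (at_right a) (locally 0) ->
  filterlim df (at_right a) (locally L) ->
  filterlim (fun x => f x / (x - a)) (at_right a) (locally L).
Proof.
  intros Hd Hf Hdf. apply filterlim_at_right_Rabs. intros eps Heps.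
  destruct (proj1 (filterlim_at_right_Rabs df a L) Hdf (eps / 4) ltac:(lra))
    as [d [Hd0 Hdf_close]].
  exists d. split; [exact Hd0|]. intros r Hr.
  assert (Hchord : forall s, a < s <= r ->
            Rabs (f r - f s - L * (r - s)) <= eps / 4 * (r - s)).
  { intros s Hs.
    replace (f r - f s - L * (r - s)) with ((f r - L * r) - (f s - L * s)) by ring.
    replace (eps / 4 * (r - s)) with (eps / 4 * r - eps / 4 * s) by ring.
    apply (Rabs_diff_le_of_derive (fun x => f x - L * x) (fun x => eps / 4 * x)
             (fun x => df x - L) (fun _ => eps / 4)); [lra| | |].
    - intros x Hx. exact (is_derive_minus f _ x _ _ (Hd x ltac:(lra)) (is_derive_scal_id L x)).
    - intros x Hx. apply is_derive_scal_id.
    - intros x Hx. left. apply Hdf_close. lra. }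
  set (t := Rmin (r - a) (eps / 4 * (r - a) / (Rabs L + 1))).
  assert (Ht : 0 < t).
  { apply Rmin_pos; [lra|]. apply Rdiv_lt_0_compat; pose proof (Rabs_pos L); nra. }
  assert (Htr : t <= r - a) by apply Rmin_l.
  assert (HtL : Rabs L * t <= eps / 4 * (r - a)).
  { apply Rle_trans with ((Rabs L + 1) * t); [pose proof (Rabs_pos L); nra|].
    apply Rle_trans with ((Rabs L + 1) * (eps / 4 * (r - a) / (Rabs L + 1))).
    - apply Rmult_le_compat_l; [pose proof (Rabs_pos L); lra|apply Rmin_r].
    - right. field. pose proof (Rabs_pos L); lra. }
  set (c := f r - L * (r - a)).
  assert (Hnear : forall s, a < s < a + t -> Rabs (f s - c) <= eps / 2 * (r - a)).
  { intros s Hs. specialize (Hchord s ltac:(lra)).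
    replace (f s - c) with (- (f r - f s - L * (r - s)) + L * (s - a)) by (unfold c; ring).
    eapply Rle_trans; [apply Rabs_triang|]. rewrite Rabs_Ropp, Rabs_mult.
    rewrite (Rabs_right (s - a)) by lra.
    assert (Rabs L * (s - a) <= Rabs L * t) by (apply Rmult_le_compat_l; [apply Rabs_pos|lra]).
    nra. }
  assert (Hc : Rabs c <= eps / 2 * (r - a)).
  { apply Rabs_le. split.
    - apply (lim_right_le f a (a + t) 0 (c + eps / 2 * (r - a))) in Hf; [lra|lra|].
      intros s Hs. specialize (Hnear s Hs). apply Rabs_le_between' in Hnear. lra.
    - apply (lim_right_ge f a (a + t) 0 (c - eps / 2 * (r - a))) in Hf; [lra|lra|].
      intros s Hs. specialize (Hnear s Hs). apply Rabs_le_between' in Hnear. lra. }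
  replace (f r / (r - a) - L) with (c / (r - a)) by (unfold c; field; lra).
  rewrite Rabs_div, (Rabs_right (r - a)) by lra.
  apply Rmult_lt_reg_r with (r - a); [lra|].
  unfold Rdiv. rewrite Rmult_assoc, Rinv_l, Rmult_1_r by lra. nra.
Qed.

Lemma nonincreasing_lim_p_infty (F : R -> R) x0 lb :
  (forall x y, x0 <= x <= y -> F y <= F x) -> (forall x, x0 <= x -> lb <= F x) ->
  exists c, lb <= c /\ filterlim F (Rbar_locally p_infty) (locally c).
Proof.
  intros Hmono Hlb.
  set (E := fun y => exists x, x0 <= x /\ y = - F x).
  assert (Hbound : bound E).
  { exists (- lb). intros y [x [Hx ->]]. specialize (Hlb x Hx). lra. }
  assert (Hne : exists y, E y) by (exists (- F x0), x0; split; [lra|reflexivity]).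
  destruct (completeness E Hbound Hne) as [m [Hub Hleast]].
  exists (- m). split.
  { assert (m <= - lb); [|lra].
    apply Hleast. intros y [x [Hx ->]]. specialize (Hlb x Hx). lra. }
  apply filterlim_locally. intros eps.
  destruct (classic (exists x1, x0 <= x1 /\ m - eps < - F x1)) as [[x1 [Hx1 Hlt]]|Hnone].
  - exists x1. intros x Hx. change (Rabs (F x - - m) < eps).
    assert (F x <= F x1) by (apply Hmono; lra).
    assert (- F x <= m) by (apply Hub; exists x; split; [lra|reflexivity]).
    apply Rabs_def1; lra.
  - exfalso. assert (m <= m - eps); [|pose proof (cond_pos eps); lra].
    apply Hleast. intros y [x [Hx ->]].
    apply Rnot_lt_le. intros Hlt. apply Hnone. now exists x.
Qed.

Lemma Rpower_opp_lim_p_infty b : 1 <= b ->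
  filterlim (fun x => Rpower x (- b)) (Rbar_locally p_infty) (locally 0).
Proof.
  intros Hb.
  apply (filterlim_le_le (fun _ => 0) _ Rinv (Finite 0)).
  - exists 1. intros x Hx. split; [left; apply exp_pos|].
    rewrite Rpower_Ropp. apply Rinv_le_contravar; [lra|].
    rewrite <- (Rpower_1 x) at 1 by lra. apply Rle_Rpower; lra.
  - apply filterlim_const.
  - exact (filterlim_Rbar_inv p_infty ltac:(easy)).
Qed.

Lemma Rabs_sqrt_minus_le x y : 0 <= x -> 1 <= y -> Rabs (sqrt x - sqrt y) <= Rabs (x - y).
Proof.
  intros Hx Hy.
  pose proof (sqrt_pos x). pose proof (sqrt_sqrt x Hx). pose proof (sqrt_sqrt y ltac:(lra)).
  assert (1 <= sqrt y) by (rewrite <- sqrt_1; apply sqrt_le_1_alt; lra).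
  replace (x - y) with ((sqrt x - sqrt y) * (sqrt x + sqrt y)) by nra.
  rewrite Rabs_mult, (Rabs_right (sqrt x + sqrt y)) by lra.
  pose proof (Rabs_pos (sqrt x - sqrt y)). nra.
Qed.

Lemma Rpower_ge_self u p : 0 < u < 1 -> p < 1 -> u <= Rpower u p.
Proof.
  intros Hu Hp. rewrite <- (exp_ln u) at 1 by lra. unfold Rpower.
  assert (ln u < 0) by (rewrite <- ln_1; apply ln_increasing; lra).
  left. apply exp_increasing. nra.
Qed.

Lemma Rpower_pred_mult u p : 0 < u -> Rpower u (p - 1) * u = Rpower u p.
Proof.
  intros Hu. rewrite <- (Rpower_1 u) at 2 by lra.
  rewrite <- Rpower_plus. f_equal. ring.
Qed.

Lemma Rpower_le_of_nonpos x y p : 0 < x <= y -> p <= 0 -> Rpower y p <= Rpower x p.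
Proof.
  intros Hxy Hp. replace p with (- - p) by ring.
  rewrite (Rpower_Ropp y (- p)), (Rpower_Ropp x (- p)).
  apply Rinv_le_contravar; [apply exp_pos|]. apply Rle_Rpower_l; lra.
Qed.

Lemma Rpower_ge_1 u p : 0 < u < 1 -> p <= 0 -> 1 <= Rpower u p.
Proof.
  intros Hu Hp.
  replace 1 with (Rpower 1 p) at 1 by (unfold Rpower; now rewrite ln_1, Rmult_0_r, exp_0).
  apply Rpower_le_of_nonpos; lra.
Qed.

Lemma beta_gt_1 g : 0 < g < 1 -> 1 < beta_of g.
Proof. intros Hg. unfold beta_of. apply (Rmult_lt_reg_r (2 - g)); [lra|]. field_simplify; lra. Qed.

Lemma inv_beta g : g < 2 -> 1 / beta_of g = 1 - g / 2.
Proof. intros Hg. unfold beta_of. field. lra. Qed.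

Definition drift (n : nat) (r : R) : R := (INR n - 1) / r + r / 2.

Lemma drift_nonneg n r : (1 <= n)%nat -> 0 < r -> 0 <= drift n r.
Proof.
  intros Hn Hr. apply (le_INR 1) in Hn. simpl in Hn. unfold drift.
  assert (0 <= (INR n - 1) / r) by (apply Rdiv_le_0_compat; lra). lra.
Qed.

Lemma drift_le n a r : (1 <= n)%nat -> 0 < a <= r -> drift n r <= drift n a + (r - a) / 2.
Proof.
  intros Hn Har. apply (le_INR 1) in Hn. simpl in Hn. unfold drift.
  assert ((INR n - 1) / r <= (INR n - 1) / a).
  { apply Rmult_le_compat_l; [lra|]. apply Rinv_le_contravar; lra. }
  lra.
Qed.

(** * Behaviour near [r = Rad] *)

Section Profile.

Variables (n : nat) (Rad g : R) (U : R -> R).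
Hypothesis Hn : (1 <= n)%nat.
Hypothesis HRad : 0 < Rad.
Hypothesis Hg : 0 < g < 1.
Hypothesis HU_derive : forall r, Rad < r -> ex_derive U r.
Hypothesis HdU_derive : forall r, Rad < r -> ex_derive (Derive U) r.
Hypothesis HU_pos : forall r, Rad < r -> 0 < U r.
Hypothesis HU_Rad : filterlim U (at_right Rad) (locally 0).
Hypothesis HdU_Rad : filterlim (Derive U) (at_right Rad) (locally 0).
Hypothesis Hode : forall r, Rad < r -> Derive (Derive U) r =
  beta_of g / 2 * U r + g * Rpower (U r) (g - 1) - drift n r * Derive U r.

Local Notation b := (beta_of g).
Local Notation dU := (Derive U).
Local Notation ddU := (Derive (Derive U)).

Lemma U_is_derive r : Rad < r -> is_derive U r (dU r).
Proof. intros Hr. now apply Derive_correct, HU_derive. Qed.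

Lemma dU_is_derive r : Rad < r -> is_derive dU r (ddU r).
Proof. intros Hr. now apply Derive_correct, HdU_derive. Qed.

Lemma at_right_U_pos : at_right Rad (fun r => 0 < U r).
Proof. exists (mkposreal 1 Rlt_0_1). intros r _ Hr. now apply HU_pos. Qed.

Lemma ddU_ge_near_Rad : exists d, 0 < d <= 1 /\
  forall r, Rad < r < Rad + d -> U r < 1 /\ g / 2 <= ddU r.
Proof.
  set (A := drift n Rad + 1 / 2).
  assert (HA : 0 < A) by (pose proof (drift_nonneg n Rad Hn HRad); unfold A; lra).
  destruct (proj1 (filterlim_at_right_Rabs U Rad 0) HU_Rad 1 Rlt_0_1) as [d1 [Hd1 HU1]].
  destruct (proj1 (filterlim_at_right_Rabs dU Rad 0) HdU_Rad (g / (2 * A)))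
    as [d2 [Hd2 HdU2]]; [apply Rdiv_lt_0_compat; lra|].
  pose proof (Rmin_l 1 (Rmin d1 d2)). pose proof (Rmin_r 1 (Rmin d1 d2)).
  pose proof (Rmin_l d1 d2). pose proof (Rmin_r d1 d2).
  exists (Rmin 1 (Rmin d1 d2)). split; [split; [apply Rmin_pos; [lra|apply Rmin_pos; lra]|lra]|].
  intros r Hr.
  specialize (HU1 r ltac:(lra)). specialize (HdU2 r ltac:(lra)). pose proof (HU_pos r ltac:(lra)).
  rewrite Rminus_0_r, Rabs_right in HU1 by lra. rewrite Rminus_0_r in HdU2.
  split; [lra|]. rewrite Hode by lra.
  pose proof (Rpower_ge_1 (U r) (g - 1) ltac:(lra) ltac:(lra)).
  pose proof (drift_nonneg n r Hn ltac:(lra)). pose proof (drift_le n Rad r Hn ltac:(lra)).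
  assert (Hdrift : Rabs (drift n r * dU r) <= A * (g / (2 * A))).
  { rewrite Rabs_mult, (Rabs_right (drift n r)) by lra.
    apply Rmult_le_compat; try apply Rabs_pos; unfold A in *; lra. }
  replace (A * (g / (2 * A))) with (g / 2) in Hdrift by (field; lra).
  pose proof (Rle_abs (drift n r * dU r)). pose proof (beta_gt_1 g Hg).
  assert (0 <= b / 2 * U r) by nra.
  nra.
Qed.

Lemma dU_pos r : Rad < r -> 0 < dU r.
Proof.
  destruct ddU_ge_near_Rad as [d [Hd Hnear]].
  assert (Hstart : forall x, Rad < x < Rad + d -> 0 < dU x).
  { intros x Hx.
    assert (Hslope : forall y, Rad < y < (Rad + x) / 2 -> dU y <= dU x - g / 4 * (x - Rad)).
    { intros y Hy.
      assert (dU y - g / 2 * y <= dU x - g / 2 * x); [|nra].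
      apply (derive_nonneg_le (fun z => dU z - g / 2 * z) (fun z => ddU z - g / 2)); [lra| |].
      - intros z Hz.
        exact (is_derive_minus dU _ z _ _ (dU_is_derive z ltac:(lra)) (is_derive_scal_id _ z)).
      - intros z Hz. specialize (Hnear z ltac:(lra)). lra. }
    pose proof (lim_right_le dU Rad ((Rad + x) / 2) 0 _ ltac:(lra) HdU_Rad Hslope).
    nra. }
  intros Hr.
  set (a := Rad + Rmin d (r - Rad) / 2).
  pose proof (Rmin_l d (r - Rad)). pose proof (Rmin_r d (r - Rad)).
  assert (0 < Rmin d (r - Rad)) by (apply Rmin_pos; lra).
  apply (derive_pos_barrier dU ddU a r 0); [unfold a; lra| | |apply Hstart; unfold a; lra].
  - intros x Hx. apply dU_is_derive. unfold a in Hx; lra.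
  - intros x Hx Hneg. rewrite Hode by (unfold a in Hx; lra).
    assert (0 < U x) by (apply HU_pos; unfold a in Hx; lra).
    pose proof (exp_pos ((g - 1) * ln (U x))). pose proof (beta_gt_1 g Hg).
    pose proof (drift_nonneg n x Hn ltac:(unfold a in Hx; lra)).
    assert (drift n x * dU x <= 0) by nra.
    unfold Rpower. nra.
Qed.

Lemma U_le s r : Rad < s <= r -> U s <= U r.
Proof.
  intros Hsr. apply (derive_nonneg_le U dU s r ltac:(lra)).
  - intros x Hx. apply U_is_derive. lra.
  - intros x Hx. left. apply dU_pos. lra.
Qed.

Definition energy r := dU r ^ 2 / 2 - Rpower (U r) g.

(* [drift n Rad + 1/2] bounds [drift n] on [(Rad, Rad + 1)]. *)
Definition energy_gauge r := b / 2 * U r + (drift n Rad + 1 / 2) * dU r.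

Lemma energy_is_derive r : Rad < r ->
  is_derive energy r (dU r * (b / 2 * U r - drift n r * dU r)).
Proof.
  intros Hr. pose proof (HU_pos r Hr) as HUr.
  unfold energy, Rpower. auto_derive.
  - repeat split; auto.
  - change (fun x => dU x) with dU. change (fun x => U x) with U.
    pose proof (Rpower_pred_mult (U r) g HUr) as Hpow. unfold Rpower in Hpow.
    rewrite <- Hpow, Hode by lra. unfold Rpower. field. lra.
Qed.

Lemma energy_lim_Rad : filterlim energy (at_right Rad) (locally 0).
Proof.
  assert (Hpow := filterlim_Rpower_0 U g (proj1 Hg) at_right_U_pos HU_Rad).
  assert (H : filterlim (fun r => dU r * dU r * / 2 + -1 * Rpower (U r) g)
                (at_right Rad) (locally (0 * 0 * / 2 + -1 * 0))).
  { apply filterlim_Rplus; apply filterlim_Rmult; try apply filterlim_const.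
    - now apply filterlim_Rmult.
    - exact Hpow. }
  replace (0 * 0 * / 2 + -1 * 0) with 0 in H by ring.
  revert H. apply filterlim_ext. intros r. unfold energy. field.
Qed.

Lemma energy_gauge_lim_Rad : filterlim energy_gauge (at_right Rad) (locally 0).
Proof.
  assert (H : filterlim (fun r => b / 2 * U r + (drift n Rad + 1 / 2) * dU r)
                (at_right Rad) (locally (b / 2 * 0 + (drift n Rad + 1 / 2) * 0))).
  { apply filterlim_Rplus; apply filterlim_Rmult; now try apply filterlim_const. }
  replace (b / 2 * 0 + (drift n Rad + 1 / 2) * 0) with 0 in H by ring.
  exact H.
Qed.

Lemma energy_le_near_Rad : exists d, 0 < d <= 1 /\
  forall r, Rad < r < Rad + d -> U r < 1 /\ Rabs (energy r) <= energy_gauge r * U r.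
Proof.
  destruct ddU_ge_near_Rad as [d [Hd Hnear]].
  exists d. split; [exact Hd|]. intros r Hr. split; [apply Hnear; lra|].
  set (C := energy_gauge r).
  assert (HC : 0 <= C).
  { pose proof (beta_gt_1 g Hg). pose proof (drift_nonneg n Rad Hn HRad).
    pose proof (HU_pos r ltac:(lra)). pose proof (dU_pos r ltac:(lra)).
    unfold C, energy_gauge. nra. }
  assert (Hrate : forall x, Rad < x <= r ->
            Rabs (dU x * (b / 2 * U x - drift n x * dU x)) <= C * dU x).
  { intros x Hx.
    pose proof (HU_pos x ltac:(lra)). pose proof (dU_pos x ltac:(lra)).
    pose proof (U_le x r Hx). pose proof (beta_gt_1 g Hg).
    pose proof (drift_nonneg n x Hn ltac:(lra)). pose proof (drift_le n Rad x Hn ltac:(lra)).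
    assert (dU x <= dU r).
    { apply (derive_nonneg_le dU ddU x r ltac:(lra)).
      - intros z Hz. apply dU_is_derive. lra.
      - intros z Hz. specialize (Hnear z ltac:(lra)). lra. }
    rewrite Rabs_mult, (Rabs_right (dU x)), Rmult_comm by lra.
    apply Rmult_le_compat_r; [lra|].
    assert (0 <= drift n x * dU x) by nra.
    apply Rabs_le. unfold C, energy_gauge. nra. }
  assert (Hstep : forall s, Rad < s < r -> Rabs (energy r - energy s) <= C * U r).
  { intros s Hs.
    apply Rle_trans with (C * U r - C * U s).
    - apply (Rabs_diff_le_of_derive energy (fun x => C * U x)
             (fun x => dU x * (b / 2 * U x - drift n x * dU x)) (fun x => C * dU x) s r);
        [lra| | |].
      + intros x Hx. apply energy_is_derive. lra.
      + intros x Hx. exact (is_derive_scal U x C _ (U_is_derive x ltac:(lra))).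
      + intros x Hx. apply Hrate. lra.
    - pose proof (HU_pos s ltac:(lra)). nra. }
  pose proof energy_lim_Rad as Hlim.
  apply Rabs_le. split.
  - apply (lim_right_le energy Rad r 0 (energy r + C * U r)) in Hlim; [lra|lra|].
    intros s Hs. specialize (Hstep s Hs). apply Rabs_le_between' in Hstep. lra.
  - apply (lim_right_ge energy Rad r 0 (energy r - C * U r)) in Hlim; [lra|lra|].
    intros s Hs. specialize (Hstep s Hs). apply Rabs_le_between' in Hstep. lra.
Qed.

Definition U_root r := Rpower (U r) (1 / b).

Definition U_root_slope r := 1 / b * sqrt (dU r ^ 2 / Rpower (U r) g).

Lemma U_root_is_derive r : Rad < r -> is_derive U_root r (U_root_slope r).
Proof.
  intros Hr. pose proof (HU_pos r Hr) as HUr. pose proof (dU_pos r Hr) as HdUr.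
  unfold U_root, U_root_slope. rewrite (inv_beta g) by lra. unfold Rpower. auto_derive.
  - repeat split; auto.
  - change (fun x => U x) with U.
    set (e := exp (g / 2 * ln (U r))). assert (He : 0 < e) by apply exp_pos.
    assert (Hsq : exp (g * ln (U r)) = e * e).
    { unfold e. rewrite <- exp_plus. f_equal. field. }
    assert (Hquot : exp ((1 - g / 2) * ln (U r)) = U r / e).
    { unfold e. replace ((1 - g / 2) * ln (U r)) with (ln (U r) + - (g / 2 * ln (U r))) by ring.
      rewrite exp_plus, exp_Ropp, exp_ln by lra. field. apply Rgt_not_eq, exp_pos. }
    rewrite Hsq, Hquot.
    replace (dU r ^ 2 / (e * e)) with ((dU r / e) ^ 2) by (field; lra).
    rewrite sqrt_pow2 by (apply Rlt_le, Rdiv_lt_0_compat; lra).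
    field. split; lra.
Qed.

Lemma U_root_lim_Rad : filterlim U_root (at_right Rad) (locally 0).
Proof.
  apply filterlim_Rpower_0; [|exact at_right_U_pos|exact HU_Rad].
  rewrite (inv_beta g); lra.
Qed.

Lemma U_root_slope_near_Rad : exists d, 0 < d /\ forall r, Rad < r < Rad + d ->
  Rabs (U_root_slope r - sqrt 2 / b) <= 2 * energy_gauge r.
Proof.
  destruct energy_le_near_Rad as [d [Hd Henergy]].
  exists d. split; [lra|]. intros r Hr. destruct (Henergy r Hr) as [HU1 HEr].
  pose proof (HU_pos r ltac:(lra)) as HUr. pose proof (dU_pos r ltac:(lra)) as HdUr.
  pose proof (beta_gt_1 g Hg) as Hb.
  assert (HC : 0 <= energy_gauge r).
  { pose proof (drift_nonneg n Rad Hn HRad). unfold energy_gauge. nra. }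
  set (P := Rpower (U r) g).
  assert (HP : 0 < P) by apply exp_pos.
  assert (HUP : U r <= P) by (apply Rpower_ge_self; lra).
  set (X := dU r ^ 2 / P).
  assert (HX : 0 <= X) by (apply Rdiv_le_0_compat; [apply pow2_ge_0|lra]).
  assert (HX2 : Rabs (X - 2) <= 2 * energy_gauge r).
  { replace (X - 2) with (2 * energy r / P) by (unfold X, energy; fold P; field; lra).
    rewrite Rabs_div, Rabs_mult, (Rabs_right 2), (Rabs_right P) by lra.
    apply Rmult_le_reg_r with P; [lra|].
    replace (2 * Rabs (energy r) / P * P) with (2 * Rabs (energy r)) by (field; lra).
    nra. }
  unfold U_root_slope. fold P X.
  replace (1 / b * sqrt X - sqrt 2 / b) with (/ b * (sqrt X - sqrt 2)) by (field; lra).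
  rewrite Rabs_mult, Rabs_right by (apply Rle_ge, Rlt_le, Rinv_0_lt_compat; lra).
  pose proof (Rabs_sqrt_minus_le X 2 HX ltac:(lra)).
  assert (/ b < 1) by (rewrite <- Rinv_1; apply Rinv_lt_contravar; lra).
  assert (0 < / b) by (apply Rinv_0_lt_compat; lra).
  pose proof (Rabs_pos (sqrt X - sqrt 2)). nra.
Qed.

Lemma U_root_slope_lim_Rad : filterlim U_root_slope (at_right Rad) (locally (sqrt 2 / b)).
Proof.
  destruct U_root_slope_near_Rad as [d [Hd Hnear]].
  assert (Hgauge : forall k, filterlim (fun r => sqrt 2 / b + k * energy_gauge r)
                               (at_right Rad) (locally (sqrt 2 / b))).
  { intros k.
    assert (H := filterlim_Rplus _ _ _ _ (filterlim_const (sqrt 2 / b))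
                   (filterlim_Rmult _ _ _ _ (filterlim_const k) energy_gauge_lim_Rad)).
    now rewrite Rmult_0_r, Rplus_0_r in H. }
  apply (filterlim_le_le (fun r => sqrt 2 / b + -2 * energy_gauge r) _
           (fun r => sqrt 2 / b + 2 * energy_gauge r) (Finite (sqrt 2 / b)));
    [|apply Hgauge|apply Hgauge].
  apply (filter_imp (fun r => Rad < r < Rad + d)); [|apply at_right_lt; lra].
  intros r Hr. specialize (Hnear r Hr). apply Rabs_le_between' in Hnear. lra.
Qed.

Lemma U_root_div_lim_Rad :
  filterlim (fun r => U_root r / (r - Rad)) (at_right Rad) (locally (sqrt 2 / b)).
Proof.
  apply lim_right_div_of_derive with U_root_slope.
  - exact U_root_is_derive.
  - exact U_root_lim_Rad.
  - exact U_root_slope_lim_Rad.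
Qed.

(** * Behaviour as [r -> +oo] *)

(* [euler_defect] vanishes exactly for the homogeneous profiles [c r^beta]. *)
Definition euler_defect r := r * dU r - b * U r.

Lemma euler_defect_gauss_is_derive K c r : Rad < r ->
  is_derive (fun x => (euler_defect x - K + c * U x / x ^ 2) * exp (x ^ 2 / 4)) r
    (exp (r ^ 2 / 4) * (g * r * Rpower (U r) (g - 1) - (INR n + b - 2) * dU r - r * K / 2
       + c * dU r / r ^ 2 - 2 * c * U r / r ^ 3 + c / 2 * U r / r)).
Proof.
  intros Hr. unfold euler_defect. auto_derive.
  - repeat split; auto. nra.
  - change (fun x => dU x) with dU. change (fun x => U x) with U.
    rewrite Hode by lra.
    replace (exp (r * (r * 1) * / 4)) with (exp (r ^ 2 / 4)) by (f_equal; field).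
    unfold drift. field. lra.
Qed.

Lemma euler_defect_le r1 : Rad < r1 ->
  exists B, 0 < B /\ forall x, r1 <= x -> euler_defect x <= B.
Proof.
  intros Hr1. pose proof (HU_pos r1 Hr1) as HU1.
  set (K := 2 * g * Rpower (U r1) (g - 1)).
  assert (HK : 0 < K) by (pose proof (exp_pos ((g - 1) * ln (U r1))); unfold K, Rpower; nra).
  set (Z := fun x => (euler_defect x - K + 0 * U x / x ^ 2) * exp (x ^ 2 / 4)).
  assert (HZ : forall x, r1 <= x -> Z x <= Z r1).
  { intros x Hx. apply Ropp_le_cancel.
    apply (derive_nonneg_le (fun z => - Z z) (fun z => - (exp (z ^ 2 / 4) *
      (g * z * Rpower (U z) (g - 1) - (INR n + b - 2) * dU z - z * K / 2
       + 0 * dU z / z ^ 2 - 2 * 0 * U z / z ^ 3 + 0 / 2 * U z / z))) r1 x Hx).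
    - intros z Hz. exact (is_derive_opp Z z _ (euler_defect_gauss_is_derive K 0 z ltac:(lra))).
    - intros z Hz.
      assert (Rpower (U z) (g - 1) <= Rpower (U r1) (g - 1)).
      { apply Rpower_le_of_nonpos; [|lra]. split; [exact HU1|apply U_le; lra]. }
      pose proof (dU_pos z ltac:(lra)). pose proof (beta_gt_1 g Hg).
      pose proof (le_INR 1 n Hn) as Hn1. simpl in Hn1.
      pose proof (exp_pos (z ^ 2 / 4)).
      assert (g * z * Rpower (U z) (g - 1) <= z * K / 2).
      { unfold K. assert (0 <= g * z) by nra. nra. }
      assert (0 <= (INR n + b - 2) * dU z) by nra.
      unfold Rdiv. rewrite !Rmult_0_l. nra. }
  set (M := Rmax (Z r1) 0).
  assert (HM : Z r1 <= M /\ 0 <= M) by (split; [apply Rmax_l|apply Rmax_r]).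
  exists (K + M). split; [lra|].
  intros x Hx. specialize (HZ x Hx).
  assert (He : 1 <= exp (x ^ 2 / 4)).
  { pose proof (exp_ineq1_le (x ^ 2 / 4)). pose proof (pow2_ge_0 x). lra. }
  assert (HZx : (euler_defect x - K) * exp (x ^ 2 / 4) <= M).
  { unfold Z at 1 in HZ. unfold Rdiv in HZ. rewrite Rmult_0_l, Rmult_0_l, Rplus_0_r in HZ. lra. }
  destruct (Rle_or_lt (euler_defect x - K) 0); nra.
Qed.

Lemma U_shifted_power_nonincreasing r1 B : Rad < r1 ->
  (forall x, r1 <= x -> euler_defect x <= B) ->
  forall x y, r1 <= x <= y -> (U y + B / b) * Rpower y (- b) <= (U x + B / b) * Rpower x (- b).
Proof.
  intros Hr1 HB x y Hxy. pose proof (beta_gt_1 g Hg).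
  apply Ropp_le_cancel.
  apply (derive_nonneg_le (fun z => - ((U z + B / b) * Rpower z (- b)))
           (fun z => - (Rpower z (- b) / z * (euler_defect z - B))) x y ltac:(lra)).
  - intros z Hz. unfold Rpower, euler_defect. auto_derive.
    + repeat split; try apply HU_derive; lra.
    + change (fun x => U x) with U. field. lra.
  - intros z Hz. specialize (HB z ltac:(lra)).
    assert (0 < Rpower z (- b) / z) by (apply Rdiv_lt_0_compat; [apply exp_pos|lra]).
    nra.
Qed.

Lemma gauss_weighted_rate_pos k b z u v Q :
  0 < k -> 0 < b -> 0 < z -> 9 <= z ^ 2 -> 4 * b <= z ^ 2 -> 4 * k <= z ^ 2 ->
  0 < u -> 0 <= Q -> z * v - b * u + 4 * k * b * u / z ^ 2 < 0 ->
  0 < Q - k * v + 4 * k * b * v / z ^ 2 - 8 * k * b * u / z ^ 3 + 2 * k * b * u / z.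
Proof.
  intros Hk Hb Hz H9 Hbz Hkz Hu HQ Hneg.
  set (q := 4 * k * b / z ^ 2) in *.
  assert (Hq : q * z ^ 2 = 4 * k * b) by (unfold q; field; lra).
  assert (0 < q) by (unfold q; apply Rdiv_lt_0_compat; nra).
  assert (q <= k) by nra. assert (q <= b) by nra. assert (2 * q < k * b) by nra.
  replace (4 * k * b * u / z ^ 2) with (q * u) in Hneg by (unfold q; field; lra).
  replace (Q - k * v + 4 * k * b * v / z ^ 2 - 8 * k * b * u / z ^ 3 + 2 * k * b * u / z)
    with ((Q * z + (q - k) * (z * v) - 2 * q * u + 2 * k * b * u) / z) by (unfold q; field; lra).
  apply Rdiv_lt_0_compat; [|lra].
  assert ((q - k) * (z * v) >= (q - k) * ((b - q) * u)) by nra.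
  assert ((q - k) * (b - q) >= - (k * b)) by nra.
  nra.
Qed.

Lemma euler_defect_ge : exists r1 C, Rad < r1 /\ 0 <= C /\
  forall x, r1 <= x -> - (C * U x / x ^ 2) <= euler_defect x.
Proof.
  pose proof (beta_gt_1 g Hg) as Hb. pose proof (le_INR 1 n Hn) as Hn1. simpl in Hn1.
  set (k := INR n + b - 2). assert (Hk : 0 < k) by (unfold k; lra).
  set (r1 := Rad + 3 + 2 * b + 2 * k).
  assert (Hr1 : Rad < r1) by (unfold r1; lra).
  assert (Hbig : forall x, r1 <= x -> 9 <= x ^ 2 /\ 4 * b <= x ^ 2 /\ 4 * k <= x ^ 2 /\ 3 <= x).
  { intros x Hx. unfold r1 in Hx. repeat split; nra. }
  set (c := 4 * k * b).
  (* With this [c], [gauss_weighted_rate_pos] makes [Z] increase wherever it is negative. *)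
  set (Z := fun x => (euler_defect x - 0 + c * U x / x ^ 2) * exp (x ^ 2 / 4)).
  assert (HZ : forall x, r1 <= x -> Rmin (Z r1) 0 <= Z x).
  { intros x Hx. apply Rnot_lt_le. intros Hlow.
    pose proof (Rmin_l (Z r1) 0). pose proof (Rmin_r (Z r1) 0).
    assert (Z x < Z x); [|lra].
    apply (derive_pos_barrier Z (fun z => exp (z ^ 2 / 4) *
      (g * z * Rpower (U z) (g - 1) - k * dU z - z * 0 / 2
       + c * dU z / z ^ 2 - 2 * c * U z / z ^ 3 + c / 2 * U z / z)) r1 x (Z x) Hx); [| |lra].
    - intros z Hz. apply euler_defect_gauss_is_derive. lra.
    - intros z Hz HZz. apply Rmult_lt_0_compat; [apply exp_pos|].
      destruct (Hbig z ltac:(lra)) as [H9 [Hbz [Hkz Hz3]]].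
      assert (HUz : 0 < U z) by (apply HU_pos; lra).
      assert (Hneg : euler_defect z + c * U z / z ^ 2 < 0).
      { assert (Z z < 0) by lra. unfold Z in *. pose proof (exp_pos (z ^ 2 / 4)). nra. }
      unfold euler_defect, c in Hneg.
      replace (z * 0 / 2) with 0 by field. unfold c.
      replace (2 * (4 * k * b) * U z / z ^ 3) with (8 * k * b * U z / z ^ 3) by (field; lra).
      replace (4 * k * b / 2 * U z / z) with (2 * k * b * U z / z) by (field; lra).
      rewrite Rminus_0_r.
      apply gauss_weighted_rate_pos; try lra.
      apply Rmult_le_pos; [nra|left; apply exp_pos]. }
  set (D := - Rmin (Z r1) 0).
  assert (HD : 0 <= D) by (pose proof (Rmin_r (Z r1) 0); unfold D; lra).
  assert (HU1 : 0 < U r1) by (apply HU_pos; lra).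
  exists r1, (c + 4 * D / U r1). split; [lra|]. split.
  { assert (0 <= 4 * D / U r1) by (apply Rdiv_le_0_compat; lra). unfold c. nra. }
  intros x Hx. specialize (HZ x Hx).
  destruct (Hbig x Hx) as [H9 [Hbx [Hkx Hx3]]].
  assert (HUx : U r1 <= U x) by (apply U_le; lra).
  assert (He : x ^ 2 / 4 < exp (x ^ 2 / 4)) by (pose proof (exp_ineq1_le (x ^ 2 / 4)); lra).
  set (Y := euler_defect x + c * U x / x ^ 2).
  assert (HY : - (4 * D / x ^ 2) <= Y).
  { unfold Z at 2 in HZ. rewrite Rminus_0_r in HZ. fold Y in HZ.
    assert (HZx : - D <= Y * exp (x ^ 2 / 4)) by (unfold D; lra).
    destruct (Rle_or_lt 0 Y) as [HY|HY].
    - assert (0 <= 4 * D / x ^ 2) by (apply Rdiv_le_0_compat; lra). lra.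
    - apply (Rmult_le_reg_r (x ^ 2 / 4)); [lra|].
      replace (- (4 * D / x ^ 2) * (x ^ 2 / 4)) with (- D) by (field; lra). nra. }
  assert (4 * D / x ^ 2 <= 4 * D / U r1 * U x / x ^ 2).
  { unfold Rdiv. apply Rmult_le_compat_r; [apply Rlt_le, Rinv_0_lt_compat; lra|].
    replace (4 * D * / U r1 * U x) with (4 * D * (U x / U r1)) by (field; lra).
    assert (1 <= U x / U r1).
    { apply (Rmult_le_reg_r (U r1)); [lra|]. unfold Rdiv. rewrite Rmult_assoc, Rinv_l; lra. }
    nra. }
  unfold Y in HY.
  replace ((c + 4 * D / U r1) * U x / x ^ 2) with (c * U x / x ^ 2 + 4 * D / U r1 * U x / x ^ 2)
    by (field; lra).
  lra.
Qed.

Lemma U_power_ge : exists r1 m, Rad < r1 /\ 0 < m /\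
  forall x, r1 <= x -> m <= U x * Rpower x (- b).
Proof.
  destruct euler_defect_ge as [r1 [C [Hr1 [HC HW]]]].
  set (H := fun x => U x * Rpower x (- b) * exp (- C / (2 * x ^ 2))).
  assert (HUr1 := HU_pos r1 Hr1).
  exists r1, (H r1). split; [exact Hr1|]. split.
  { unfold H. pose proof (exp_pos (- b * ln r1)). pose proof (exp_pos (- C / (2 * r1 ^ 2))).
    unfold Rpower. apply Rmult_lt_0_compat; [nra|lra]. }
  intros x Hx.
  assert (Hmono : H r1 <= H x).
  { apply (derive_nonneg_le H (fun z => Rpower z (- b) * exp (- C / (2 * z ^ 2)) / z *
             (euler_defect z + C * U z / z ^ 2)) r1 x Hx).
    - intros z Hz. unfold H, Rpower, euler_defect. auto_derive.
      + repeat split; try apply HU_derive; nra.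
      + change (fun x => U x) with U.
        replace (exp (- C * / (2 * (z * (z * 1))))) with (exp (- C / (2 * z ^ 2)))
          by (f_equal; field; lra).
        field. lra.
    - intros z Hz. specialize (HW z (proj1 Hz)).
      apply Rmult_le_pos; [|lra].
      apply Rdiv_le_0_compat; [|lra]. left. apply Rmult_lt_0_compat; apply exp_pos. }
  assert (Hcorr : exp (- C / (2 * x ^ 2)) <= 1).
  { rewrite <- exp_0.
    assert (Hneg : - C / (2 * x ^ 2) <= 0).
    { unfold Rdiv. assert (0 < / (2 * x ^ 2)) by (apply Rinv_0_lt_compat; nra). nra. }
    destruct Hneg as [Hneg|Hzero]; [left; now apply exp_increasing|rewrite Hzero; now right]. }
  assert (0 < U x * Rpower x (- b)).
  { apply Rmult_lt_0_compat; [apply HU_pos; lra|apply exp_pos]. }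
  assert (H x <= U x * Rpower x (- b)); [|lra].
  unfold H. pose proof (exp_pos (- C / (2 * x ^ 2))). nra.
Qed.

Lemma U_div_power_lim : exists c, 0 < c /\
  filterlim (fun r => U r / Rpower r b) (Rbar_locally p_infty) (locally c).
Proof.
  destruct U_power_ge as [r1 [m [Hr1 [Hm Hlow]]]].
  destruct (euler_defect_le r1 Hr1) as [B [HB HWB]].
  pose proof (beta_gt_1 g Hg) as Hb.
  destruct (nonincreasing_lim_p_infty (fun x => (U x + B / b) * Rpower x (- b)) r1 m)
    as [c [Hc Hlim]].
  - exact (U_shifted_power_nonincreasing r1 B Hr1 HWB).
  - intros x Hx. specialize (Hlow x Hx).
    assert (0 <= B / b * Rpower x (- b)).
    { apply Rmult_le_pos; [apply Rdiv_le_0_compat; lra|left; apply exp_pos]. }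
    nra.
  exists c. split; [lra|].
  assert (Hsum := filterlim_Rplus _ _ _ _ Hlim (filterlim_Rmult _ _ _ _
    (filterlim_const (- (B / b))) (Rpower_opp_lim_p_infty b (Rlt_le _ _ Hb)))).
  rewrite Rmult_0_r, Rplus_0_r in Hsum.
  revert Hsum. apply filterlim_ext. intros x.
  rewrite Rpower_Ropp. field. split; [apply Rgt_not_eq, exp_pos|lra].
Qed.

End Profile.

Theorem lemma6p7 (n : nat) (Rad g : R) (U : R -> R)
  (Hn : (1 <= n)%nat) (HR : 0 < Rad) (Hg0 : 0 < g) (Hg1 : g < 1)
  (* U is C^2 on (Rad, +oo) *)
  (HC2 : forall r, Rad < r ->
     ex_derive U r /\ ex_derive (Derive U) r /\ continuous (Derive (Derive U)) r)
  (* U positive on (Rad, +oo) *)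
  (Hpos : forall r, Rad < r -> 0 < U r)
  (* U and U' extend continuously to r = Rad, with U(Rad) = U'(Rad) = 0 *)
  (HU0 : filterlim U (at_right Rad) (locally 0))
  (HdU0 : filterlim (Derive U) (at_right Rad) (locally 0))
  (* the ODE on (Rad, +oo) *)
  (Hode : forall r, Rad < r ->
     Derive (Derive U) r + ((INR n - 1) / r + r / 2) * Derive U r
       - beta_of g / 2 * U r = g * Rpower (U r) (g - 1)) :
  (forall r, Rad < r -> 0 < U r) /\
  (forall r, Rad < r -> 0 < Derive U r) /\
  filterlim (fun r => Rpower (U r) (1 / beta_of g) / (r - Rad))
    (at_right Rad) (locally (sqrt 2 / beta_of g)) /\
  (exists c, 0 < c /\
     filterlim (fun r => U r / Rpower r (beta_of g)) (Rbar_locally p_infty) (locally c)).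
Proof.
  assert (Hg : 0 < g < 1) by lra.
  assert (HU' : forall r, Rad < r -> ex_derive U r) by apply HC2.
  assert (HdU' : forall r, Rad < r -> ex_derive (Derive U) r) by apply HC2.
  assert (Hode' : forall r, Rad < r -> Derive (Derive U) r =
            beta_of g / 2 * U r + g * Rpower (U r) (g - 1) - drift n r * Derive U r).
  { intros r Hr. specialize (Hode r Hr). unfold drift. lra. }
  split; [exact Hpos|]. split; [|split].
  - exact (dU_pos n Rad g U Hn HR Hg HdU' Hpos HU0 HdU0 Hode').
  - exact (U_root_div_lim_Rad n Rad g U Hn HR Hg HU' HdU' Hpos HU0 HdU0 Hode').
  - exact (U_div_power_lim n Rad g U Hn HR Hg HU' HdU' Hpos HU0 HdU0 Hode').
Qed.
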